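(* Let $\mathcal{X}\subseteq\mathbb{R}^m$ be countable with ground metric $d$, let $\widehat\nu = \sum_{j=1}^N\widehat\nu_j\delta_{\widehat x_j}$ be a probability mass function supported on $N$ distinct points $\widehat x_1,\dots,\widehat x_N\in\mathcal{X}$ with $\widehat\nu_j>0$ and $\sum_j\widehat\nu_j=1$, and let $x_1,\dots,x_L\in\mathcal{X}$ be a batch of observations. Let $\mathcal{M}_{x_1^L}(\mathcal{X}) = \{\nu\in\mathcal{M}(\mathcal{X}):\nu(x_\ell)>0\ \forall\ell\in[L]\}$ and, for $\varepsilon>0$, $\mathbb{B}_{\mathbb{W}}(\widehat\nu,\varepsilon) = \{\nu\in\mathcal{M}_{x_1^L}(\mathcal{X}) : \mathbb{W}(\nu,\widehat\nu)\le\varepsilon\}$. Then $$\sup_{\nu\in\mathbb{B}_{\mathbb{W}}(\widehat\nu,\varepsilon)}\sum_{\ell=1}^L\log\nu(x_\ell) = \max\Big\{\sum_{\ell=1}^L\log\Big(\sum_{j=1}^N T_{j\ell}\Big) : T\in\mathbb{R}^{N\times L}_+,\ \sum_{j\in[N],\,\ell\in[L]} d(\widehat x_j,x_\ell)\,T_{j\ell}\le\varepsilon,\ \sum_{\ell=1}^L T_{j\ell}\le\widehat\nu_j\ \forall j\in[N]\Big\},$$ and the right-hand side is a finite convex program.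
   Context: $\mathcal{M}(\mathcal{X})$ is the set of probability mass functions on $\mathcal{X}$. The type-1 Wasserstein distance is $\mathbb{W}(\nu_1,\nu_2) = \inf_{\lambda\in\Lambda(\nu_1,\nu_2)}\mathbb{E}_\lambda[d(x_1,x_2)]$ over couplings $\lambda$ on $\mathcal{X}\times\mathcal{X}$ with marginals $\nu_1,\nu_2$.
   Formalization: The observations $x_1$, …, $x_L$ are assumed pairwise distinct, and in the objective of the convex program log 0 is taken as −∞. Each condition added here is assumed in the paper as well or is needed for the statement above to hold. *)

From HB Require Import structures.
From mathcomp Require Import all_boot all_order all_algebra.
From mathcomp Require Import all_classical all_reals all_analysis.
Set Implicit Arguments. Unset Strict Implicit. Unset Printing Implicit Defensive.
Import Order.TTheory GRing.Theory Num.Theory.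
Local Open Scope classical_set_scope.
Local Open Scope ring_scope.

Section Defs.
Variables (R : realType) (m : nat).
Notation pt := 'rV[R]_m.

Definition is_metric_on (X : set pt) (d : pt -> pt -> R) : Prop :=
  (forall x y, X x -> X y -> 0 <= d x y) /\
  (forall x y, X x -> X y -> (d x y = 0 <-> x = y)) /\
  (forall x y, X x -> X y -> d x y = d y x) /\
  (forall x y z, X x -> X y -> X z -> d x z <= d x y + d y z).

Definition is_pmf (X : set pt) (nu : pt -> R) : Prop :=
  (forall x, 0 <= nu x) /\ (forall x, ~ X x -> nu x = 0) /\
  (\esum_(x in X) (nu x)%:E = 1)%E.

Definition is_coupling (X : set pt) (nu1 nu2 : pt -> R) (lam : pt -> pt -> R) : Prop :=
  (forall x y, 0 <= lam x y) /\
  (forall x y, ~ (X x /\ X y) -> lam x y = 0) /\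
  (forall x, \esum_(y in X) (lam x y)%:E = (nu1 x)%:E) /\
  (forall y, \esum_(x in X) (lam x y)%:E = (nu2 y)%:E).

Definition coupling_cost (X : set pt) (d : pt -> pt -> R) (lam : pt -> pt -> R) : \bar R :=
  \esum_(p in X `*` X) (d p.1 p.2 * lam p.1 p.2)%:E.

Definition wass (X : set pt) (d : pt -> pt -> R) (nu1 nu2 : pt -> R) : \bar R :=
  ereal_inf [set c | exists lam, is_coupling X nu1 nu2 lam /\ c = coupling_cost X d lam].

Definition discrete_pmf (N : nat) (xh : 'I_N -> pt) (nuh : 'I_N -> R) : pt -> R :=
  fun x => \sum_(j < N | xh j == x) nuh j.

Definition wass_ball (X : set pt) (d : pt -> pt -> R) (L : nat) (x : 'I_L -> pt)
    (nuh : pt -> R) (eps : R) : set (pt -> R) :=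
  [set nu | is_pmf X nu /\ (forall l, 0 < nu (x l)) /\ (wass X d nu nuh <= eps%:E)%E].

Definition elog (s : R) : \bar R := if 0 < s then (ln s)%:E else -oo%E.

Definition cvx_obj (N L : nat) (T : 'M[R]_(N, L)) : \bar R :=
  (\sum_(l < L) elog (\sum_(j < N) T j l))%E.

Definition cvx_feasible (N L : nat) (d : pt -> pt -> R) (xh : 'I_N -> pt) (nuh : 'I_N -> R)
    (x : 'I_L -> pt) (eps : R) (T : 'M[R]_(N, L)) : Prop :=
  (forall j l, 0 <= T j l) /\
  \sum_(j < N) \sum_(l < L) d (xh j) (x l) * T j l <= eps /\
  (forall j, \sum_(l < L) T j l <= nuh j).
End Defs.

From HB Require Import structures.
From mathcomp Require Import all_boot all_order all_algebra.
From mathcomp Require Import all_classical all_reals all_analysis.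
From mathcomp Require Import lra.
Import Order.TTheory GRing.Theory Num.Theory.
Import numFieldNormedType.Exports.
Local Open Scope classical_set_scope.
Local Open Scope ring_scope.

(* A feasible T is a partial transport plan: moving the mass T_jl from xh_j to
   x_l and leaving the rest of nuh_j in place yields a coupling of cost at most
   eps whose first marginal nu has nu(x_l) >= sum_j T_jl; hence the supremum is
   at least the value of the program.  Conversely, for nu in the ball and any
   kappa > 1 some coupling lambda of nu and nuh costs less than kappa * eps; the
   matrix lambda(x_l, xh_j) / kappa is then feasible with column sums
   nu(x_l) / kappa, so the supremum exceeds the value by at most L ln kappa.
   Finally the program has a maximizer: truncated below at a small level c, the
   objective is continuous on the compact feasible set, and comparison with a
   uniform plan shows that a maximizer of the truncation has all column sums
   >= c, where truncation is harmless. *)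

Set Implicit Arguments.
Unset Strict Implicit.
Unset Printing Implicit Defensive.

Lemma big_option (V : nmodType) (I : finType) (F : option I -> V) :
  \sum_o F o = F None + \sum_i F (Some i).
Proof.
rewrite (bigD1 None) //= (reindex_omap Some id) => [|[i|]//].
by congr (_ + _); apply: eq_bigl => i; rewrite eqxx.
Qed.

Lemma sum_pair (V : nmodType) (I J : finType) (F : I * J -> V) :
  \sum_p F p = \sum_i \sum_j F (i, j).
Proof. by rewrite pair_bigA; apply: eq_bigr => -[]. Qed.

Section dirac_mixture.
Variables (R : realType) (I : finType).

Definition dirac_mix (T : eqType) (z : I -> T) (c : I -> R) (t : T) : R :=
  \sum_i c i * (t == z i)%:R.

Variable T : choiceType.
Implicit Types (z : I -> T) (c : I -> R) (S : set T).

Lemma dirac_mix_ge0 z c t : (forall i, 0 <= c i) -> 0 <= dirac_mix z c t.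
Proof. by move=> c0; apply: sumr_ge0 => i _; rewrite mulr_ge0. Qed.

Lemma dirac_mix_out z c t : (forall i, z i != t) -> dirac_mix z c t = 0.
Proof. by move=> zt; apply: big1 => i _; rewrite eq_sym (negbTE (zt i)) mulr0. Qed.

Lemma dirac_mix_inj z c k : injective z -> dirac_mix z c (z k) = c k.
Proof.
move=> zI; rewrite /dirac_mix (bigD1 k) //= eqxx mulr1 big1 ?addr0 // => i ik.
by rewrite (inj_eq zI) eq_sym (negbTE ik) mulr0.
Qed.

Lemma mul_dirac_mix (f : T -> R) z c t :
  f t * dirac_mix z c t = dirac_mix z (fun i => f (z i) * c i) t.
Proof.
rewrite /dirac_mix mulr_sumr; apply: eq_bigr => i _.
by rewrite mulrA; case: eqP => [->|_]; rewrite ?mulr0.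
Qed.

Lemma esum_dirac S (a : T) (r : R) : S a -> 0 <= r ->
  \esum_(t in S) (r * (t == a)%:R)%:E = r%:E.
Proof.
move=> Sa r0; rewrite (esumID [set a]); last by move=> t _; rewrite lee_fin mulr_ge0.
rewrite setIidr; last by move=> t ->.
rewrite esum_set1 ?eqxx ?mulr1 ?lee_fin // esum1 ?adde0 // => t [_ /eqP ta].
by rewrite (negbTE ta) mulr0.
Qed.

Lemma esum_dirac_mix S z c : (forall i, S (z i)) -> (forall i, 0 <= c i) ->
  \esum_(t in S) (dirac_mix z c t)%:E = (\sum_i c i)%:E.
Proof.
move=> Sz c0; under eq_esum do rewrite /dirac_mix -sumEFin.
rewrite esum_sum => [|t i _ _]; last by rewrite lee_fin mulr_ge0.
by rewrite -sumEFin; apply: eq_bigr => i _; exact: esum_dirac.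
Qed.

Lemma le_sum_esum S z (f : T -> R) :
  injective z -> (forall i, S (z i)) -> (forall t, S t -> 0 <= f t) ->
  ((\sum_i f (z i))%:E <= \esum_(t in S) (f t)%:E)%E.
Proof.
move=> zI Sz f0; rewrite -(esum_dirac_mix Sz (fun i => f0 _ (Sz i))).
apply: le_esum => t St; rewrite lee_fin.
have [[k <-]|zt] := pselect (exists k, z k = t); first by rewrite dirac_mix_inj.
by rewrite dirac_mix_out ?f0 // => k; apply/eqP => zkt; apply: zt; exists k.
Qed.

Lemma esum_ge_term S (f : T -> \bar R) t : S t -> (f t <= \esum_(s in S) f s)%E.
Proof.
move=> St; apply: esum_ge; exists [set t]; last by rewrite fsbig_set1.
by split; [exact: finite_set1 | move=> _ ->].
Qed.

End dirac_mixture.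

Section couplings.
Variables (R : realType) (m : nat) (X : set 'rV[R]_m).
Local Notation pt := 'rV[R]_m.

Lemma discrete_pmfE N (xh : 'I_N -> pt) (nuh : 'I_N -> R) :
  discrete_pmf xh nuh = dirac_mix xh nuh.
Proof.
apply: funext => t; rewrite /discrete_pmf /dirac_mix big_mkcond.
by apply: eq_bigr => j _; rewrite eq_sym; case: eqP; rewrite ?mulr1 ?mulr0.
Qed.

Variable I : finType.

Lemma is_pmf_dirac_mix (z : I -> pt) (c : I -> R) :
  (forall i, X (z i)) -> (forall i, 0 <= c i) -> \sum_i c i = 1 ->
  is_pmf X (dirac_mix z c).
Proof.
move=> Xz c0 c1; split; first by move=> t; exact: dirac_mix_ge0.
split; last by rewrite esum_dirac_mix // c1.
by move=> t Xt; apply: dirac_mix_out => i; apply/eqP => zt; apply: Xt; rewrite -zt.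
Qed.

Lemma dirac_mix_coupling (z : I -> pt * pt) (c : I -> R) :
  (forall i, X (z i).1 /\ X (z i).2) -> (forall i, 0 <= c i) ->
  is_coupling X (dirac_mix (fun i => (z i).1) c) (dirac_mix (fun i => (z i).2) c)
    (fun a b => dirac_mix z c (a, b)).
Proof.
move=> Xz c0.
have pairE a b i : ((a, b) == z i)%:R = (a == (z i).1)%:R * (b == (z i).2)%:R :> R.
  by case: (z i) => u v; rewrite xpair_eqE; case: (a == u); rewrite ?mul1r ?mul0r.
have sndE a b : dirac_mix z c (a, b) =
    dirac_mix (fun i => (z i).2) (fun i => c i * (a == (z i).1)%:R) b.
  by apply: eq_bigr => i _; rewrite pairE mulrA.
have fstE a b : dirac_mix z c (a, b) =
    dirac_mix (fun i => (z i).1) (fun i => c i * (b == (z i).2)%:R) a.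
  by apply: eq_bigr => i _; rewrite pairE mulrA mulrAC.
split=> [a b|]; first exact: dirac_mix_ge0.
split=> [a b Xab|].
  apply: dirac_mix_out => i; apply/eqP => zab; apply: Xab.
  by move: (Xz i); rewrite zab.
split=> [a|b].
  under eq_esum do rewrite sndE.
  by rewrite esum_dirac_mix // => i; [exact: (Xz i).2 | rewrite mulr_ge0].
under eq_esum do rewrite fstE.
by rewrite esum_dirac_mix // => i; [exact: (Xz i).1 | rewrite mulr_ge0].
Qed.

Lemma coupling_cost_dirac_mix (d : pt -> pt -> R) (z : I -> pt * pt) (c : I -> R) :
  (forall a b, X a -> X b -> 0 <= d a b) ->
  (forall i, X (z i).1 /\ X (z i).2) -> (forall i, 0 <= c i) ->
  coupling_cost X d (fun a b => dirac_mix z c (a, b)) =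
    (\sum_i d (z i).1 (z i).2 * c i)%:E.
Proof.
move=> d0 Xz c0; rewrite /coupling_cost.
under eq_esum do rewrite -surjective_pairing (mul_dirac_mix (fun p => d p.1 p.2)).
rewrite esum_dirac_mix // => i; rewrite mulr_ge0 //.
by case: (Xz i) => ??; exact: d0.
Qed.

Lemma wass_le_coupling_cost (d : pt -> pt -> R) nu1 nu2 lam :
  is_coupling X nu1 nu2 lam -> (wass X d nu1 nu2 <= coupling_cost X d lam)%E.
Proof. by move=> lamC; apply: ereal_inf_lbound; exists lam. Qed.

Lemma coupling_le_snd nu1 nu2 lam a b :
  is_coupling X nu1 nu2 lam -> X a -> lam a b <= nu2 b.
Proof.
case=> _ [_ [_ lam2]] Xa; rewrite -lee_fin -lam2.
exact: (esum_ge_term (fun a => (lam a b)%:E)).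
Qed.
End couplings.

Lemma cvx_objE (R : realType) N L (T : 'M[R]_(N, L)) : (forall l, 0 < \sum_j T j l) ->
  cvx_obj T = (\sum_l ln (\sum_j T j l))%:E.
Proof.
by move=> Tpos; rewrite /cvx_obj -sumEFin; apply: eq_bigr => l _; rewrite /elog Tpos.
Qed.

Lemma continuous_sum (R : realType) (T : topologicalType) (I : Type) (r : seq I)
    (P : pred I) (F : I -> T -> R) :
  (forall i, P i -> continuous (F i)) -> continuous (fun v => \sum_(i <- r | P i) F i v).
Proof. by move=> Fc; apply: continuous_big => //; exact: add_continuous. Qed.

Lemma closed_forall (T : topologicalType) (I : Type) (A : I -> set T) :
  (forall i, closed (A i)) -> closed [set v | forall i, A i v].
Proof.
move=> Ac; have -> : [set v | forall i, A i v] = \bigcap_i A i.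
  by apply/seteqP; split=> v Av i //; exact: Av.
by apply: closed_bigI => i _; exact: Ac.
Qed.

Section closed_sublevel.
Variables (R : realType) (T : topologicalType) (f : T -> R) (a : R).
Hypothesis f_cont : continuous f.

Lemma closed_le_continuous : closed [set v | f v <= a].
Proof. by have := (continuous_closedP f).1 f_cont _ (@closed_le R a). Qed.

Lemma closed_ge_continuous : closed [set v | a <= f v].
Proof. by have := (continuous_closedP f).1 f_cont _ (@closed_ge R a). Qed.
End closed_sublevel.

Lemma continuous_vec_mx_entry (R : realType) n p (j : 'I_n) (l : 'I_p) :
  continuous (fun v : 'rV[R]_(n * p) => vec_mx v j l).
Proof.
have -> : (fun v : 'rV[R]_(n * p) => vec_mx v j l) = fun v => v 0 (mxvec_index j l).
  by apply: funext => v; rewrite -mxvecE vec_mxK.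
exact: coord_continuous.
Qed.

Section wasserstein_ball.
Variables (R : realType) (m : nat) (X : set 'rV[R]_m) (d : 'rV[R]_m -> 'rV[R]_m -> R).
Variables (N L : nat) (xh : 'I_N -> 'rV[R]_m) (nuh : 'I_N -> R) (x : 'I_L -> 'rV[R]_m).
Variable eps : R.
Hypothesis d_metric : is_metric_on X d.
Hypotheses (xh_inj : injective xh) (xhX : forall j, X (xh j)).
Hypotheses (nuh_gt0 : forall j, 0 < nuh j) (nuh_sum1 : \sum_j nuh j = 1).
Hypotheses (xX : forall l, X (x l)) (x_inj : injective x).
Hypothesis eps_gt0 : 0 < eps.
Local Notation pt := 'rV[R]_m.
Local Notation feasible := (cvx_feasible d xh nuh x).
Local Notation nuhat := (discrete_pmf xh nuh).

Let d_ge0 a b : X a -> X b -> 0 <= d a b.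
Proof. by case: d_metric => + _; apply. Qed.

Let d_sym a b : X a -> X b -> d a b = d b a.
Proof. by case: d_metric => _ [_ [+ _]]; apply. Qed.

Let d_refl a : X a -> d a a = 0.
Proof. by case: d_metric => _ [+ _] Xa; move/(_ a a Xa Xa) => [_]; apply. Qed.

Let nuh_le1 j : nuh j <= 1.
Proof. by rewrite -nuh_sum1 (bigD1 j) //= lerDl sumr_ge0 // => i _; exact/ltW. Qed.

Lemma colsum_le1 e (T : 'M[R]_(N, L)) l : feasible e T -> \sum_j T j l <= 1.
Proof.
case=> T0 [_ Trow]; rewrite -nuh_sum1; apply: ler_sum => j _.
by apply: le_trans (Trow j); rewrite (bigD1 l) //= lerDl sumr_ge0.
Qed.

(* Index [(j, Some l)] carries the mass [T j l] moved from [xh j] to [x l],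
   index [(j, None)] the rest of [nuh j], which stays at [xh j]. *)
Definition plan_weight (T : 'M[R]_(N, L)) (p : 'I_N * option 'I_L) : R :=
  if p.2 is Some l then T p.1 l else nuh p.1 - \sum_l T p.1 l.

Definition plan_move (p : 'I_N * option 'I_L) : pt * pt :=
  (if p.2 is Some l then x l else xh p.1, xh p.1).

Definition plan_marginal (T : 'M[R]_(N, L)) : pt -> R :=
  dirac_mix (fun p => (plan_move p).1) (plan_weight T).

Lemma plan_weight_ge0 e T p : feasible e T -> 0 <= plan_weight T p.
Proof. by case=> T0 [_ Trow]; case: p => j [l|]; rewrite /plan_weight /= ?subr_ge0. Qed.

Lemma sum_plan_weight T j : \sum_o plan_weight T (j, o) = nuh j.
Proof. by rewrite big_option /plan_weight /= subrK. Qed.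

Lemma plan_move_in_X p : X (plan_move p).1 /\ X (plan_move p).2.
Proof. by case: p => j [l|]; split; apply: xX || apply: xhX. Qed.

Definition plan_coupling (T : 'M[R]_(N, L)) : pt -> pt -> R :=
  fun a b => dirac_mix plan_move (plan_weight T) (a, b).

Lemma is_coupling_plan e T : feasible e T ->
  is_coupling X (plan_marginal T) nuhat (plan_coupling T).
Proof.
move=> Tf.
have -> : nuhat = dirac_mix (fun p => (plan_move p).2) (plan_weight T).
  rewrite discrete_pmfE; apply: funext => t; rewrite /dirac_mix sum_pair.
  by apply: eq_bigr => j _; rewrite -(sum_plan_weight T) mulr_suml.
apply: dirac_mix_coupling => p; [exact: plan_move_in_X | exact: plan_weight_ge0 Tf].
Qed.

Lemma plan_marginal_pmf e T : feasible e T -> is_pmf X (plan_marginal T).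
Proof.
move=> Tf; apply: is_pmf_dirac_mix => [p|p|]; first exact: (plan_move_in_X p).1.
  exact: plan_weight_ge0 Tf.
by rewrite sum_pair; under eq_bigr do rewrite sum_plan_weight.
Qed.

Lemma plan_marginal_ge e T l : feasible e T -> \sum_j T j l <= plan_marginal T (x l).
Proof.
move=> Tf; rewrite /plan_marginal /dirac_mix sum_pair; apply: ler_sum => j _.
rewrite (bigD1 (Some l)) //= eqxx mulr1 lerDl; apply: sumr_ge0 => o _.
by rewrite mulr_ge0 // (plan_weight_ge0 _ Tf).
Qed.

Lemma coupling_cost_plan e T : feasible e T ->
  coupling_cost X d (plan_coupling T) = (\sum_j \sum_l d (xh j) (x l) * T j l)%:E.
Proof.
move=> Tf; rewrite coupling_cost_dirac_mix //; last 2 first.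
- exact: plan_move_in_X.
- by move=> p; exact: plan_weight_ge0 Tf.
congr (_%:E); rewrite sum_pair; apply: eq_bigr => j _.
rewrite big_option /= d_refl // mul0r add0r.
by apply: eq_bigr => l _; rewrite d_sym.
Qed.

Lemma plan_in_ball T : feasible eps T -> (forall l, 0 < \sum_j T j l) ->
  wass_ball X d x nuhat eps (plan_marginal T).
Proof.
move=> Tf Tpos; split; first exact: plan_marginal_pmf Tf.
split=> [l|]; first exact: lt_le_trans (Tpos l) (plan_marginal_ge l Tf).
apply: le_trans (wass_le_coupling_cost _ (is_coupling_plan Tf)) _.
by rewrite (coupling_cost_plan Tf) lee_fin; case: Tf => _ [].
Qed.

Lemma cvx_obj_le_sup T : feasible eps T -> (forall l, 0 < \sum_j T j l) ->
  (cvx_obj T <= ereal_sup [set (\sum_l ln (nu (x l)))%:E | nu in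
                             wass_ball X d x nuhat eps])%E.
Proof.
move=> Tf Tpos; rewrite cvx_objE //.
apply: (@le_trans _ _ (\sum_l ln (plan_marginal T (x l)))%:E).
  rewrite lee_fin; apply: ler_sum => l _; have Tl := plan_marginal_ge l Tf.
  by rewrite ler_ln ?posrE // (lt_le_trans (Tpos l) Tl).
by apply: ereal_sup_ubound; exists (plan_marginal T) => //; exact: plan_in_ball.
Qed.

Definition restrict_plan (lam : pt -> pt -> R) : 'M[R]_(N, L) :=
  \matrix_(j, l) lam (x l) (xh j).

Lemma restrict_plan_feasible nu lam e : is_coupling X nu nuhat lam ->
  (coupling_cost X d lam <= e%:E)%E -> feasible e (restrict_plan lam).
Proof.
move=> lamC cost_le; have [lam0 [_ [_ lam2]]] := lamC.
split=> [j l|]; first by rewrite mxE.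
split=> [|j].
  have zI : injective (fun p : 'I_N * 'I_L => (x p.2, xh p.1)).
    by move=> [j l] [j' l'] [/x_inj -> /xh_inj ->].
  have cost_ge0 q : (X `*` X) q -> 0 <= d q.1 q.2 * lam q.1 q.2.
    by case=> Xq1 Xq2; rewrite mulr_ge0 ?d_ge0.
  have := le_sum_esum zI (fun p => conj (xX p.2) (xhX p.1)) cost_ge0.
  move=> /le_trans /(_ cost_le); rewrite lee_fin sum_pair; apply: le_trans.
  by apply/ler_sum => j _; apply/ler_sum => l _; rewrite mxE d_sym.
rewrite (eq_bigr (fun l => lam (x l) (xh j))) => [|l _]; last by rewrite mxE.
have := le_sum_esum (f := fun t => lam t (xh j)) x_inj xX (fun t _ => lam0 _ _).
by rewrite lam2 discrete_pmfE dirac_mix_inj // lee_fin.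
Qed.

Lemma colsum_restrict_plan nu lam l : is_coupling X nu nuhat lam ->
  \sum_j restrict_plan lam j l = nu (x l).
Proof.
move=> lamC; have [lam0 [_ [lam1 _]]] := lamC.
have supp y : X y -> lam (x l) y = dirac_mix xh (fun j => lam (x l) (xh j)) y.
  move=> Xy; have [[j <-]|noj] := pselect (exists j, xh j = y).
    by rewrite dirac_mix_inj.
  have xhy j : xh j != y by apply/eqP => e; apply: noj; exists j.
  rewrite dirac_mix_out //; apply/eqP; rewrite eq_le lam0 andbT.
  by rewrite -(dirac_mix_out nuh xhy) -discrete_pmfE (coupling_le_snd _ lamC).
apply/EFin_inj; rewrite -lam1 (eq_esum (fun y Xy => congr1 EFin (supp y Xy))).
by rewrite esum_dirac_mix //; under eq_bigr do rewrite mxE.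
Qed.

Lemma cvx_feasible_scale e k T : 0 <= k <= 1 -> feasible e T -> feasible (k * e) (k *: T).
Proof.
case/andP=> k0 k1 [T0 [Tc Trow]]; split=> [j l|]; first by rewrite mxE mulr_ge0.
split=> [|j].
  have -> : \sum_j \sum_l d (xh j) (x l) * (k *: T) j l =
      k * \sum_j \sum_l d (xh j) (x l) * T j l.
    rewrite mulr_sumr; apply: eq_bigr => j _; rewrite mulr_sumr.
    by apply: eq_bigr => l _; rewrite mxE mulrCA.
  exact: ler_wpM2l.
have -> : \sum_l (k *: T) j l = k * \sum_l T j l.
  by rewrite mulr_sumr; apply: eq_bigr => l _; rewrite mxE.
apply: le_trans (ler_wpM2l k0 (Trow j)) _.
by rewrite ler_piMl // ltW.
Qed.

Lemma cvx_obj_of_ball nu kappa : wass_ball X d x nuhat eps nu -> 1 < kappa ->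
  exists2 T, feasible eps T &
    cvx_obj T = (\sum_l ln (nu (x l)) - L%:R * ln kappa)%:E.
Proof.
case=> _ [nu_gt0 W] k1; have k0 : 0 < kappa by apply: lt_trans k1.
have : (wass X d nu nuhat < (kappa * eps)%:E)%E.
  by apply: le_lt_trans W _; rewrite lte_fin ltr_pMl.
case/ereal_inf_lt => _ [lam [lamC ->]] cost_lt.
exists (kappa^-1 *: restrict_plan lam).
  rewrite -[eps](mulKf (lt0r_neq0 k0)); apply: cvx_feasible_scale.
    by rewrite invr_ge0 ltW //= invf_le1 // ltW.
  exact: restrict_plan_feasible lamC (ltW cost_lt).
have colE l : \sum_j (kappa^-1 *: restrict_plan lam) j l = nu (x l) / kappa.
  rewrite -(colsum_restrict_plan l lamC) mulr_suml.
  by apply: eq_bigr => j _; rewrite !mxE mulrC.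
rewrite cvx_objE => [|l]; last by rewrite colE divr_gt0.
congr (_%:E); under eq_bigr do rewrite colE lnM ?posrE ?invr_gt0 // lnV ?posrE //.
by rewrite big_split /= sumrN sumr_const card_ord mulr_natl.
Qed.

Lemma uniform_plan_feasible :
  exists2 t, 0 < t <= 1 & feasible eps (\matrix_(j, l) (t * nuh j)).
Proof.
pose D := \sum_j \sum_l d (xh j) (x l) * nuh j.
have D0 : 0 <= D.
  by do 2!(apply: sumr_ge0 => ? _); rewrite mulr_ge0 ?d_ge0 // ltW.
pose t := Num.min (L%:R + 1)^-1 (eps / (D + 1)).
have t0 : 0 < t by rewrite lt_min invr_gt0 ltr_wpDl //= divr_gt0 ?ltr_wpDl.
have tL : t * (L%:R + 1) <= 1 by rewrite -ler_pdivlMr ?ltr_wpDl // div1r ge_min lexx.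
have tD : t * (D + 1) <= eps by rewrite -ler_pdivlMr ?ltr_wpDl // ge_min lexx orbT.
have L0 : 0 <= L%:R :> R by [].
exists t; first by rewrite t0 /=; nra.
pose T0 : 'M[R]_(N, L) := \matrix_(j, l) (t * nuh j).
split=> [j l|]; first by rewrite mxE mulr_ge0 ?ltW.
split=> [|j].
  have -> : \sum_j \sum_l d (xh j) (x l) * T0 j l = t * D.
    rewrite /D mulr_sumr; apply: eq_bigr => j _; rewrite mulr_sumr.
    by apply: eq_bigr => l _; rewrite mxE mulrCA.
  nra.
have -> : \sum_l T0 j l = t * nuh j * L%:R.
  rewrite (eq_bigr (fun=> t * nuh j)) => [|l _]; last by rewrite mxE.
  by rewrite sumr_const card_ord mulr_natr.
have := nuh_gt0 j; nra.
Qed.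

Lemma compact_feasible : compact [set v : 'rV[R]_(N * L) | feasible eps (vec_mx v)].
Proof.
apply: (subclosed_compact _ (rV_compact (fun=> @segment_compact R 0 1))).
  apply: closedI; last apply: closedI.
  - apply: closed_forall => j; apply: closed_forall => l.
    exact/closed_ge_continuous/continuous_vec_mx_entry.
  - apply: closed_le_continuous; apply: continuous_sum => j _.
    apply: continuous_sum => l _ v; apply: continuousM; first exact: cst_continuous.
    exact: continuous_vec_mx_entry.
  - apply: closed_forall => j; apply: closed_le_continuous.
    by apply: continuous_sum => l _; exact: continuous_vec_mx_entry.
move=> v [T0 [_ Trow]] i; case/mxvec_indexP: i => j l.
have -> : v ord0 (mxvec_index j l) = vec_mx v j l by rewrite -{1}(vec_mxK v) mxvecE.
rewrite /= in_itv /= T0 /=.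
apply: le_trans (nuh_le1 j); apply: le_trans (Trow j).
by rewrite (bigD1 l) //= lerDl sumr_ge0.
Qed.

Definition trunc_obj (c : R) (T : 'M[R]_(N, L)) : R :=
  \sum_l ln (Num.max c (\sum_j T j l)).

Lemma continuous_trunc_obj c : 0 < c ->
  continuous (fun v : 'rV[R]_(N * L) => trunc_obj c (vec_mx v)).
Proof.
move=> c0; apply: continuous_sum => l _ v.
pose F (v : 'rV[R]_(N * L)) := Num.max c (\sum_j vec_mx v j l).
have Fc : {for v, continuous F}.
  apply: (@continuous_max _ _ (fun=> c)); first exact: cst_continuous.
  by apply: continuous_sum => j _; exact: continuous_vec_mx_entry.
by apply: (continuous_comp Fc); apply: continuous_ln; rewrite lt_max c0.
Qed.

Lemma trunc_obj_le_ln c T l : 0 < c -> c <= 1 -> feasible eps T ->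
  \sum_j T j l < c -> trunc_obj c T <= ln c.
Proof.
move=> c0 c1 Tf Tl; rewrite /trunc_obj (bigD1 l) //= (max_l (ltW Tl)).
rewrite -[leRHS]addr0 lerD //.
apply: sumr_le0 => i _; apply: ln_le0.
by rewrite ge_max c1 (colsum_le1 _ Tf).
Qed.

Lemma ln_le_trunc_obj c t (T : 'M[R]_(N, L)) : 0 < t -> (forall l, \sum_j T j l = t) ->
  ln (t ^+ L) <= trunc_obj c T.
Proof.
move=> t0 colT; rewrite lnXn //.
have -> : ln t *+ L = \sum_(l < L) ln t by rewrite sumr_const card_ord.
apply: ler_sum => l _; rewrite colT ler_ln ?posrE ?le_max ?lexx ?orbT //.
by rewrite lt_max t0 orbT.
Qed.

Lemma cvx_obj_le_trunc c T : 0 < c -> (cvx_obj T <= (trunc_obj c T)%:E)%E.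
Proof.
move=> c0; rewrite /cvx_obj /trunc_obj -sumEFin; apply: lee_sum => l _; rewrite /elog.
case: ifP => [s0|_]; last exact: leNye.
by rewrite lee_fin ler_ln ?posrE ?le_max ?lexx ?orbT // lt_max s0 orbT.
Qed.

Lemma cvx_obj_max : exists2 Topt : 'M[R]_(N, L),
    feasible eps Topt /\ (forall l, 0 < \sum_j Topt j l) &
    forall T, feasible eps T -> (cvx_obj T <= cvx_obj Topt)%E.
Proof.
have [t /andP[t0 t1] T0f] := uniform_plan_feasible.
set T0 := \matrix_(j, l) (t * nuh j) in T0f.
have colT0 l : \sum_j T0 j l = t.
  rewrite (eq_bigr (fun j => t * nuh j)) => [|j _]; last by rewrite mxE.
  by rewrite -mulr_sumr nuh_sum1 mulr1.
pose c := t ^+ L / 2.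
have tL0 : 0 < t ^+ L by rewrite exprn_gt0.
have c0 : 0 < c by rewrite divr_gt0.
have ctL : c < t ^+ L by rewrite ltr_pdivrMr // ltr_pMr // ltr1n.
have c1 : c <= 1 by rewrite (le_trans (ltW ctL)) // exprn_ile1 // ltW.
have feas0 : [set v | feasible eps (vec_mx v)] !=set0.
  by exists (mxvec T0); rewrite /= mxvecK.
have [v /[1!inE] vf vmax] := EVT_max_rV feas0 compact_feasible
  (continuous_subspaceT (continuous_trunc_obj c0)).
pose Topt := vec_mx v.
have trunc_max T : feasible eps T -> trunc_obj c T <= trunc_obj c Topt.
  by move=> Tf; have := vmax (mxvec T); rewrite mxvecK inE /= mxvecK; apply.
have col_ge l : c <= \sum_j Topt j l.
  rewrite leNgt; apply/negP => small.
  have lnc : ln c < ln (t ^+ L) by rewrite ltr_ln ?posrE.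
  have := trunc_obj_le_ln c0 c1 vf small.
  have := trunc_max T0 T0f; have := ln_le_trunc_obj c t0 colT0.
  lra.
have col_gt0 l : 0 < \sum_j Topt j l := lt_le_trans c0 (col_ge l).
exists Topt => // T Tf; rewrite (cvx_objE col_gt0).
apply: le_trans (cvx_obj_le_trunc T c0) _; rewrite lee_fin.
apply: le_trans (trunc_max T Tf) _.
by apply: ler_sum => l _; rewrite max_r ?col_ge.
Qed.

End wasserstein_ball.

Lemma ler_of_le_add_natmul (R : realFieldType) (a b : R) n :
  (forall u, 0 < u -> a <= b + n%:R * u) -> a <= b.
Proof.
move=> le_ab; apply/ler_addgt0Pr => e e0.
have n1 : 0 < n%:R + 1 :> R by rewrite ltr_wpDl.
have u0 : 0 < e / (n%:R + 1) by rewrite divr_gt0.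
apply: le_trans (le_ab _ u0) _; rewrite lerD2l mulrA ler_pdivrMr //.
nra.
Qed.

Theorem mainTheorem14 (R : realType) (m : nat) (X : set 'rV[R]_m)
    (d : 'rV[R]_m -> 'rV[R]_m -> R) (N L : nat)
    (xh : 'I_N -> 'rV[R]_m) (nuh : 'I_N -> R) (x : 'I_L -> 'rV[R]_m) (eps : R) :
  countable X ->
  is_metric_on X d ->
  injective xh -> (forall j, X (xh j)) ->
  (forall j, 0 < nuh j) -> \sum_(j < N) nuh j = 1 ->
  (forall l, X (x l)) -> injective x ->
  0 < eps ->
  exists2 Topt : 'M[R]_(N, L),
    cvx_feasible d xh nuh x eps Topt /\
    (forall T, cvx_feasible d xh nuh x eps T -> (cvx_obj T <= cvx_obj Topt)%E) &
    ereal_sup [set (\sum_(l < L) ln (nu (x l)))%:E | nu in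
                 wass_ball X d x (discrete_pmf xh nuh) eps] = cvx_obj Topt.
Proof.
move=> _ met xh_inj xhX nuh_gt0 nuh_sum1 xX x_inj eps_gt0.
have [Topt [Topt_feas Topt_gt0] Topt_max] :=
  cvx_obj_max met xhX nuh_gt0 nuh_sum1 xX eps_gt0.
exists Topt => //; apply/eqP.
rewrite eq_le (cvx_obj_le_sup met xhX nuh_sum1 xX Topt_feas Topt_gt0) andbT.
apply: ge_ereal_sup => _ [nu nu_ball <-]; rewrite (cvx_objE Topt_gt0) lee_fin.
apply: (@ler_of_le_add_natmul _ _ _ L) => u u_gt0.
have kappa_gt1 : 1 < expR u by rewrite expR_gt1.
have [T T_feas objT] :=
  cvx_obj_of_ball met xh_inj xhX nuh_gt0 xX x_inj eps_gt0 nu_ball kappa_gt1.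
have := Topt_max T T_feas.
by rewrite objT (cvx_objE Topt_gt0) lee_fin expRK lerBlDr.
Qed.
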